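(* The $(1+1)$-elitist unary unbiased black-box complexity of the $\mathrm{DLB}$ problem is $\Omega(n^3)$; that is, there is a constant $c>0$ such that for all (sufficiently large) even $n$, every $(1+1)$-elitist unary unbiased black-box algorithm has expected runtime at least $c n^3$ on $\mathrm{DLB}:\{0,1\}^n\to\mathbb{R}$.
   Context: Let $n$ be an even positive integer. For $x\in\{0,1\}^n$ consider the blocks $(x_{2\ell+1},x_{2\ell+2})$, $\ell=0,\dots,\frac n2-1$. If $x\neq(1,\dots,1)$, let $m$ be the smallest $\ell$ with $x_{2\ell+1}\neq 1$ or $x_{2\ell+2}\neq 1$, and define $\mathrm{DLB}(x)=2m+1$ if $x_{2m+1}+x_{2m+2}=0$ and $\mathrm{DLB}(x)=2m$ if $x_{2m+1}+x_{2m+2}=1$; set $\mathrm{DLB}(1,\dots,1)=n$. The $\mathrm{DLB}$ problem is to maximize $\mathrm{DLB}$. A unary unbiased variation operator $V$ assigns to each $x\in\{0,1\}^n$ a probability distribution $V(x)$ on $\{0,1\}^n$ such that for all $x,y,z\in\{0,1\}^n$, $\Pr[y=V(x)]=\Pr[y\oplus z=V(x\oplus z)]$, and for all permutations $\sigma$ of $[1..n]$, $\Pr[y=V(x)]=\Pr[\sigma(y)=V(\sigma(x))]$, where $\sigma(x)=(x_{\sigma(1)},\dots,x_{\sigma(n)})$. A $(1+1)$-elitist unary unbiased black-box algorithm starts with a search point $x$ chosen uniformly at random from $\{0,1\}^n$; in each iteration it chooses a unary unbiased variation operator $V$ (this choice may depend only on the fitness values of the search points generated so far), samples $q\sim V(x)$,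 evaluates it, and replaces $x$ by a best individual among $\{x,q\}$ (ties broken arbitrarily). Every generated search point is evaluated immediately. The runtime is the number of fitness evaluations until (and including) the first evaluation of an optimal solution. The $(1+1)$-elitist black-box complexity of $\mathrm{DLB}$ is the infimum, over all such algorithms, of the expected runtime on $\mathrm{DLB}$. *)

From HB Require Import structures.
From mathcomp Require Import all_boot all_order all_algebra all_fingroup.
From mathcomp Require Import all_classical all_reals.
From mathcomp Require Import ereal topology normedtype sequences.
Set Implicit Arguments. Unset Strict Implicit. Unset Printing Implicit Defensive.
Import Order.TTheory GRing.Theory Num.Theory.
Local Open Scope ring_scope.

(* Search space {0,1}^n; position i : 'I_n is the (i+1)-th bit of the paper. *)
Definition B (n : nat) := {ffun 'I_n -> bool}.

Definition bit (n : nat) (x : B n) (i : nat) : bool :=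
  if insub i is Some j then x j else false.

(* dlb_aux n x l k: inspect blocks l, l+1, ..., l+k-1 (block l = bits 2l, 2l+1,
   i.e. (x_{2l+1}, x_{2l+2}) in the paper's 1-indexing). *)
Fixpoint dlb_aux (n : nat) (x : B n) (l k : nat) : nat :=
  match k with
  | 0 => n
  | k'.+1 =>
      if bit x l.*2 && bit x l.*2.+1 then dlb_aux x l.+1 k'
      else if ~~ bit x l.*2 && ~~ bit x l.*2.+1 then l.*2.+1
      else l.*2
  end.

(* DLB(x): m = first block that is not (1,1); 2m+1 if it is (0,0), 2m if it has
   exactly one 1; n for the all-ones string. *)
Definition DLB (n : nat) (x : B n) : nat := dlb_aux x 0 n./2.

Definition optimal (n : nat) (x : B n) : bool := [forall y : B n, DLB y <= DLB x]%N.

Definition bxor (n : nat) (x z : B n) : B n := [ffun i => x i (+) z i].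
Definition bperm (n : nat) (s : {perm 'I_n}) (x : B n) : B n := [ffun i => x (s i)].

(* V x y = Pr[y = V(x)] *)
Definition unary_unbiased (R : realType) (n : nat) (V : B n -> B n -> R) : Prop :=
  [/\ (forall x y, 0 <= V x y),
      (forall x, \sum_(y : B n) V x y = 1),
      (forall x y z, V x y = V (bxor x z) (bxor y z)) &
      (forall x y (s : {perm 'I_n}), V x y = V (bperm s x) (bperm s y))].

(* A (1+1)-elitist unary unbiased black-box algorithm: the operator used in each
   iteration is a function of the sequence of fitness values seen so far, and
   ties are broken by a rule (true = replace x by q) that is a function of the
   fitness history including the offspring's fitness. *)
Record ealg (R : realType) (n : nat) := EAlg {
  op : seq nat -> B n -> B n -> R;
  op_unbiased : forall h, unary_unbiased (op h);
  tie : seq nat -> bool }.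

Definition select (R : realType) (n : nat) (A : ealg R n) (h' : seq nat) (x q : B n) : B n :=
  if (DLB x < DLB q)%N then q
  else if (DLB q < DLB x)%N then x
  else if tie A h' then q else x.

(* probability that the iterations starting from current point x with fitness
   history h generate exactly the offspring sequence qs *)
Fixpoint steps (R : realType) (n : nat) (A : ealg R n) (h : seq nat) (x : B n)
    (qs : seq (B n)) : R :=
  match qs with
  | [::] => 1
  | q :: qs' =>
      let h' := rcons h (DLB q) in
      op A h x q * steps A h' (select A h' x q) qs'
  end.

(* probability that the first size qs evaluated points are exactly qs
   (initial point uniform) *)
Definition traj_prob (R : realType) (n : nat) (A : ealg R n) (qs : seq (B n)) : R :=
  match qs with
  | [::] => 1
  | q0 :: qs' => (#|{: B n}|%:R)^-1 * steps A [:: DLB q0] q0 qs'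
  end.

(* Pr[T > k]: none of the first k evaluated points is optimal *)
Definition surv (R : realType) (n : nat) (A : ealg R n) (k : nat) : R :=
  \sum_(qs : k.-tuple (B n)) (if all (fun q => ~~ optimal q) qs then traj_prob A qs else 0).

(* E[T] = sum_{k >= 0} Pr[T > k]  (possibly +oo) *)
Definition expected_runtime (R : realType) (n : nat) (A : ealg R n) : \bar R :=
  (\sum_(0 <= k <oo) (surv A k)%:E)%E.

Definition dlb_complexity (R : realType) (n : nat) : \bar R :=
  ereal_inf (range (@expected_runtime R n)).

From HB Require Import structures.
From mathcomp Require Import all_boot all_order all_algebra all_fingroup.
From mathcomp Require Import all_classical all_reals.
From mathcomp Require Import ereal topology normedtype sequences.
From mathcomp Require Import zify ring lra.
Import Order.TTheory GRing.Theory Num.Theory.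
Set Implicit Arguments. Unset Strict Implicit. Unset Printing Implicit Defensive.
Local Open Scope ring_scope.

(* Write n = 2L and M = L/2, and call the first block of a search point that is not 11
   its critical block.  The potential [pot] of a fitness value with critical block m is
   -(L - M) for m < M and -(L - m - 1) for m >= M, lowered by 4 more when block m is 00
   (and 0 at the optimum): by elitism a 00 critical block can only be left by making it
   11 directly, i.e. by flipping both of its bits and none before them.  The bits behind
   the critical block have never influenced the run, so by XOR-unbiasedness they are
   uniformly random given the history; averaging over them shows that one iteration
   raises the expected potential by at most 4 times the probability of that double flip
   at a critical block m >= M, which by permutation-unbiasedness is at most
   1/m^2 <= 1/M^2.  The expected potential starts at -(L - M), and the potential is at
   least -(L - M + 4) away from the optimum, so the optimum is missed with probability
   at least 1/4 during the first (L - M) M^2 / 8 = Omega(n^3) evaluations. *)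

Section BitStrings.
Variable n : nat.
Local Notation B := (B n).

Definition zeros : B := [ffun=> false].
Definition mask_from (p : nat) (z : B) : B := [ffun i : 'I_n => (p <= i)%N && z i].

Lemma bitE (x : B) (i : 'I_n) : bit x i = x i.
Proof. by rewrite /bit valK. Qed.

Lemma bitP (x y : B) : (forall i, (i < n)%N -> bit x i = bit y i) -> x = y.
Proof. by move=> eq_xy; apply/ffunP => i; rewrite -!bitE eq_xy. Qed.

Lemma bit_zeros i : bit zeros i = false.
Proof. by rewrite /bit; case: insub => // j; rewrite ffunE. Qed.

Lemma bit_bxor (x z : B) i : bit (bxor x z) i = bit x i (+) bit z i.
Proof. by rewrite /bit; case: insub => // j; rewrite ffunE. Qed.

Lemma bit_mask_from p (z : B) i : bit (mask_from p z) i = (p <= i)%N && bit z i.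
Proof. by rewrite /bit; case: insubP => [j _ <-|_]; rewrite ?ffunE ?andbF. Qed.

Lemma bit_bxor_mask_from_lt (y z : B) p i : (i < p)%N ->
  bit (bxor y (mask_from p z)) i = bit y i.
Proof. by move=> lt_ip; rewrite bit_bxor bit_mask_from leqNgt lt_ip addbF. Qed.

Lemma bxorK (z : B) : involutive (fun x : B => bxor x z).
Proof. by move=> x; apply: bitP => i _; rewrite !bit_bxor addbK. Qed.

Lemma bxorC (x z : B) : bxor x z = bxor z x.
Proof. by apply: bitP => i _; rewrite !bit_bxor addbC. Qed.

Lemma bxorA (x y z : B) : bxor x (bxor y z) = bxor (bxor x y) z.
Proof. by apply: bitP => i _; rewrite !bit_bxor addbA. Qed.

Lemma bxorAC (x y z : B) : bxor (bxor x y) z = bxor (bxor x z) y.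
Proof. by rewrite -!bxorA [bxor y z]bxorC. Qed.

Lemma bxor0 (x : B) : bxor x zeros = x.
Proof. by apply: bitP => i _; rewrite !bit_bxor bit_zeros addbF. Qed.

Lemma bxorKl (x : B) : cancel (bxor x) (bxor x).
Proof. by move=> y; rewrite bxorC [bxor x y]bxorC bxorK. Qed.

Lemma mask_from0 (z : B) : mask_from 0 z = z.
Proof. by apply: bitP => i _; rewrite bit_mask_from. Qed.

Lemma mask_from_ge p (z : B) : (n <= p)%N -> mask_from p z = zeros.
Proof.
move=> le_np; apply: bitP => i lt_in; rewrite bit_mask_from bit_zeros.
by rewrite leqNgt (leq_trans lt_in le_np).
Qed.

Lemma sum_bxor (V : nmodType) (F : B -> V) (c : B) :
  \sum_z F z = \sum_z F (bxor z c).
Proof. exact: reindex_inj (can_inj (bxorK c)). Qed.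

End BitStrings.

Section CriticalBlock.
Variable L : nat.
Local Notation n := L.*2.
Local Notation B := (B n).

Definition ones_block (x : B) l := bit x l.*2 && bit x l.*2.+1.
Definition zeros_block (x : B) l := ~~ bit x l.*2 && ~~ bit x l.*2.+1.

Definition crit_block (x : B) := find (fun l => ~~ ones_block x l) (iota 0 L).

Lemma dlb_aux_find (x : B) l k : dlb_aux x l k =
  let j := find (fun i => ~~ ones_block x i) (iota l k) in
  if (j < k)%N then (if zeros_block x (l + j) then (l + j).*2.+1 else (l + j).*2)
  else n.
Proof.
elim: k l => [|k IH] l //=; rewrite /ones_block /zeros_block.
by case: ifP => _ /=; rewrite ?IH /= ?ltnS ?addSnnS ?addn0.
Qed.

Lemma DLB_crit (x : B) : DLB x =
  if (crit_block x < L)%N then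
    (if zeros_block x (crit_block x) then (crit_block x).*2.+1 else (crit_block x).*2)
  else n.
Proof. by rewrite /DLB doubleK dlb_aux_find. Qed.

Lemma crit_block_le (x : B) : (crit_block x <= L)%N.
Proof. by rewrite -[X in (_ <= X)%N](size_iota 0 L) find_size. Qed.

Lemma ones_block_lt_crit (x : B) l : (l < crit_block x)%N -> ones_block x l.
Proof.
move=> lt_lc; have lt_lL := leq_trans lt_lc (crit_block_le x).
by have := before_find 0 lt_lc; rewrite nth_iota // add0n => /negbFE.
Qed.

Lemma not_ones_crit_block (x : B) :
  (crit_block x < L)%N -> ~~ ones_block x (crit_block x).
Proof.
move=> lt_cL.
have has_c : has (fun l => ~~ ones_block x l) (iota 0 L) by rewrite has_find size_iota.
by have := nth_find 0 has_c; rewrite nth_iota // add0n.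
Qed.

Lemma crit_block_eq (x : B) m : (m <= L)%N -> (forall l, (l < m)%N -> ones_block x l) ->
  ((m < L)%N -> ~~ ones_block x m) -> crit_block x = m.
Proof.
move=> le_mL ones_lt not_ones_m; case: (ltngtP (crit_block x) m) => // [lt_cm|lt_mc].
- by have := not_ones_crit_block (leq_trans lt_cm le_mL); rewrite ones_lt.
- have := not_ones_m (leq_trans lt_mc (crit_block_le x)).
  by rewrite ones_block_lt_crit.
Qed.

Lemma crit_block_ge (x : B) m : (m <= L)%N ->
  (forall l, (l < m)%N -> ones_block x l) -> (m <= crit_block x)%N.
Proof.
move=> le_mL ones_x; rewrite leqNgt; apply/negP => lt_cm.
by have := not_ones_crit_block (leq_trans lt_cm le_mL); rewrite ones_x.
Qed.

Lemma blocks_agree (x y : B) k l : (l.*2.+2 <= k)%N ->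
  (forall i, (i < k)%N -> bit x i = bit y i) ->
  ones_block x l = ones_block y l /\ zeros_block x l = zeros_block y l.
Proof. by move=> le_lk eq_xy; rewrite /ones_block /zeros_block !eq_xy //; lia. Qed.

Lemma crit_block_prefix (x y : B) :
  (forall i, (i < (crit_block x).*2.+2)%N -> bit x i = bit y i) ->
  crit_block y = crit_block x /\ DLB y = DLB x.
Proof.
move=> eq_xy.
have agree l : (l <= crit_block x)%N ->
    ones_block x l = ones_block y l /\ zeros_block x l = zeros_block y l.
  by move=> le_lc; apply: blocks_agree eq_xy; rewrite !ltnS leq_double.
have eq_c : crit_block y = crit_block x.
  apply: crit_block_eq; first exact: crit_block_le.
  - by move=> l lt_lc; rewrite -(agree l (ltnW lt_lc)).1 ones_block_lt_crit.
  - by move=> lt_cL; rewrite -(agree _ (leqnn _)).1 not_ones_crit_block.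
by rewrite !DLB_crit eq_c (agree _ (leqnn _)).2.
Qed.

Lemma crit_block_bxor_mask_from (y z : B) k : ((crit_block y).*2.+2 <= k)%N ->
  crit_block (bxor y (mask_from k z)) = crit_block y /\ DLB (bxor y (mask_from k z)) = DLB y.
Proof.
move=> le_ck; apply: crit_block_prefix => i lt_ic.
by rewrite bit_bxor_mask_from_lt // (leq_trans lt_ic le_ck).
Qed.

Lemma DLB_at_block (x : B) m : (m < L)%N -> (forall l, (l < m)%N -> ones_block x l) ->
  ~~ ones_block x m -> DLB x = if zeros_block x m then m.*2.+1 else m.*2.
Proof.
move=> lt_mL ones_lt not_ones_m.
by rewrite DLB_crit (crit_block_eq (ltnW lt_mL) ones_lt) ?lt_mL.
Qed.

Lemma DLB_ge_crit (x : B) : ((crit_block x).*2 <= DLB x)%N.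
Proof.
rewrite DLB_crit; case: ifP => [_|]; first by case: ifP.
by rewrite leq_double crit_block_le.
Qed.

Lemma DLB_lt_crit (x : B) :
  (crit_block x < L)%N -> (DLB x < (crit_block x).*2.+2)%N.
Proof. by move=> lt_cL; rewrite DLB_crit lt_cL; case: ifP. Qed.

Lemma DLB_le (x : B) : (DLB x <= n)%N.
Proof. by rewrite DLB_crit; case: ifP => // lt_cL; case: ifP => _; lia. Qed.

Lemma DLB_bxor_mask_from_le (x y z : B) : (DLB y <= DLB x)%N ->
  DLB (bxor y (mask_from (crit_block x).*2.+2 z)) = DLB y.
Proof.
move=> le_yx; have [lt_xL|ge_xL] := ltnP (crit_block x) L.
  apply: (crit_block_bxor_mask_from _ _).2.
  by have := DLB_ge_crit y; have := DLB_lt_crit lt_xL; lia.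
by rewrite mask_from_ge ?bxor0 //; lia.
Qed.

Lemma DLB_eq_n (x : B) : (DLB x == n) = (crit_block x == L).
Proof.
have := crit_block_le x; rewrite DLB_crit.
case: ifP => [lt_cL _|/negbT ge_cL le_cL]; first by case: ifP => _; lia.
by rewrite eqxx; apply/esym/eqP; lia.
Qed.

Lemma DLB_ones : DLB ([ffun=> true] : B) = n.
Proof.
apply/eqP; rewrite DLB_eq_n; apply/eqP.
apply: crit_block_eq => // [l lt_lL|]; last by rewrite ltnn.
have lt2 : (l.*2 < n)%N by rewrite ltn_double.
have lt21 : (l.*2.+1 < n)%N by rewrite ltn_Sdouble.
by rewrite /ones_block -[l.*2]/(val (Ordinal lt2)) -[l.*2.+1]/(val (Ordinal lt21)) !bitE !ffunE.
Qed.

Lemma optimalE (x : B) : optimal x = (DLB x == n).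
Proof.
apply/forallP/eqP => [opt_x|-> y]; last exact: DLB_le.
by apply/eqP; rewrite eqn_leq DLB_le -{1}DLB_ones opt_x.
Qed.

End CriticalBlock.

Section Run.
Variables (R : realType) (n : nat) (A : ealg R n).
Local Notation B := (B n).

Lemma op_ge0 h (x q : B) : 0 <= op A h x q.
Proof. by case: (op_unbiased A h). Qed.

Lemma op_sum1 h (x : B) : \sum_q op A h x q = 1.
Proof. by case: (op_unbiased A h). Qed.

Lemma op_bxor h (x q r : B) : op A h (bxor x r) (bxor q r) = op A h x q.
Proof. by case: (op_unbiased A h) => _ _ op_bxor _; rewrite -op_bxor. Qed.

Lemma select_DLB h (x q : B) : DLB (select A h x q) = maxn (DLB x) (DLB q).
Proof. by rewrite /select /maxn; case: ltngtP => // eq_xq; case: ifP; rewrite ?eq_xq. Qed.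

Lemma all_select_cons (P : pred B) h (x q : B) qs :
  all P [:: x, q & qs] -> all P (select A h x q :: qs).
Proof.
by rewrite /select /= => /and3P[Px Pq ->]; rewrite andbT; do 3?case: ifP.
Qed.

Lemma select_bxor h (x q r : B) : DLB (bxor x r) = DLB x -> DLB (bxor q r) = DLB q ->
  select A h (bxor x r) (bxor q r) = bxor (select A h x q) r.
Proof. by rewrite /select => -> ->; do 3?case: ifP. Qed.

Fixpoint run (h : seq nat) (x : B) (qs : seq B) : seq nat * B :=
  if qs is q :: qs' then run (rcons h (DLB q)) (select A (rcons h (DLB q)) x q) qs'
  else (h, x).

Lemma run_rcons h x qs q : run h x (rcons qs q) =
  let h' := rcons (run h x qs).1 (DLB q) in (h', select A h' (run h x qs).2 q).
Proof. by elim: qs h x => [|q' qs IH] h x //=. Qed.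

Lemma steps_rcons h x qs q : steps A h x (rcons qs q) =
  steps A h x qs * op A (run h x qs).1 (run h x qs).2 q.
Proof.
elim: qs h x => [|q' qs IH] h x /=; first by rewrite mulr1 mul1r.
by rewrite IH mulrA.
Qed.

Lemma steps_ge0 h x qs : 0 <= steps A h x qs.
Proof. by elim: qs h x => [|q qs IH] h x //=; rewrite mulr_ge0 ?op_ge0. Qed.

Lemma DLB_le_run h x qs y : y \in x :: qs -> (DLB y <= DLB (run h x qs).2)%N.
Proof.
elim: qs h x y => [|q qs IH] h x y /=; first by rewrite inE => /eqP ->.
set h' := rcons h (DLB q); have le_sel := IH h' _ _ (mem_head (select A h' x q) qs).
rewrite !inE => /or3P[/eqP->|/eqP->|qs_y]; last by rewrite IH // inE qs_y orbT.
- by apply: leq_trans le_sel; rewrite select_DLB leq_maxl.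
- by apply: leq_trans le_sel; rewrite select_DLB leq_maxr.
Qed.

Section Shift.
Variable r : B.
Local Notation shift := (fun y : B => bxor y r).
Local Notation fixes_DLB := (fun y : B => DLB (bxor y r) == DLB y).

Lemma run_bxor h x qs : all fixes_DLB (x :: qs) ->
  run h (shift x) (map shift qs) = ((run h x qs).1, shift (run h x qs).2).
Proof.
elim: qs h x => [|q qs IH] h x //= fix_xqs.
have /and3P[/eqP fix_x /eqP fix_q _] := fix_xqs.
by rewrite fix_q select_bxor // IH // all_select_cons.
Qed.

Lemma steps_bxor h x qs : all fixes_DLB (x :: qs) ->
  steps A h (shift x) (map shift qs) = steps A h x qs.
Proof.
elim: qs h x => [|q qs IH] h x //= fix_xqs.
have /and3P[/eqP fix_x /eqP fix_q _] := fix_xqs.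
by rewrite fix_q op_bxor select_bxor // IH // all_select_cons.
Qed.

End Shift.

Definition traj_state (t : seq B) : seq nat * B :=
  if t is q0 :: qs then run [:: DLB q0] q0 qs else ([::], zeros n).

Lemma traj_prob_ge0 t : 0 <= traj_prob A t.
Proof. by case: t => [|q qs] //=; rewrite mulr_ge0 ?steps_ge0 ?invr_ge0. Qed.

Lemma traj_prob_rcons t q : t != [::] ->
  traj_prob A (rcons t q) = traj_prob A t * op A (traj_state t).1 (traj_state t).2 q.
Proof. by case: t => [|q0 qs] //= _; rewrite steps_rcons mulrA. Qed.

Lemma traj_state_rcons t q : t != [::] ->
  traj_state (rcons t q) = let h' := rcons (traj_state t).1 (DLB q) in
    (h', select A h' (traj_state t).2 q).
Proof. by case: t => [|q0 qs] //= _; rewrite run_rcons. Qed.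

End Run.

Section Potential.
Variables (R : realType) (L : nat).
Local Notation n := L.*2.
Local Notation M := L./2.
Local Notation B := (B n).

Definition pot (D : nat) : R :=
  if D == n then 0
  else if (D./2 < M)%N then - (L - M)%:R
  else if odd D then - (L - (D./2).+1)%:R - 4 else - (L - (D./2).+1)%:R.

Definition tail_pot (m : nat) : R := - (L - maxn m M)%:R.

Lemma pot_double m : (m < L)%N ->
  pot m.*2 = if (m < M)%N then - (L - M)%:R else - (L - m.+1)%:R.
Proof.
move=> lt_mL; rewrite /pot (_ : (m.*2 == n) = false); last by apply/negbTE; lia.
by rewrite doubleK odd_double.
Qed.

Lemma pot_double1 m : (m < L)%N ->
  pot m.*2.+1 = if (m < M)%N then - (L - M)%:R else - (L - m.+1)%:R - 4.
Proof.
move=> lt_mL; rewrite /pot (_ : (m.*2.+1 == n) = false); last by apply/negbTE; lia.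
by rewrite -[(m.*2.+1)./2]/(uphalf m.*2) uphalf_double /= odd_double.
Qed.

Lemma pot_double1_le m : (m < L)%N -> pot m.*2.+1 <= pot m.*2.
Proof. by move=> lt_mL; rewrite pot_double // pot_double1 //; case: ifP => _; lra. Qed.

Lemma pot_ge D : - ((L - M)%:R + 4) <= pot D.
Proof.
rewrite /pot; case: ifP => _; first by rewrite oppr_le0 addr_ge0.
case: ifP => [_|/negbT]; first by rewrite lerN2 lerDl.
rewrite -leqNgt => le_MD.
have : (L - (D./2).+1)%:R <= (L - M)%:R :> R by rewrite ler_nat; lia.
by case: ifP => _; lra.
Qed.

Lemma tail_pot_step m : (m < L)%N ->
  tail_pot m.+1 + pot m.*2.+1 + 2 * pot m.*2 = 4 * tail_pot m.
Proof.
move=> lt_mL; rewrite pot_double // pot_double1 // /tail_pot.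
case: (ltnP m M) => [lt_mM|le_Mm].
  rewrite (maxn_idPr lt_mM) /=; ring.
rewrite (maxn_idPl (leqW le_Mm)) /=.
by rewrite (_ : (L - m = (L - m.+1) + 1)%N) ?natrD; [ring | lia].
Qed.

Definition block_pattern m (c1 c2 : bool) : B :=
  [ffun i : 'I_n => ((i == m.*2 :> nat) && c1) || ((i == m.*2.+1 :> nat) && c2)].

Definition fill_block m (y : B) : B :=
  [ffun i : 'I_n => [|| i == m.*2 :> nat, i == m.*2.+1 :> nat | y i]].

Lemma bit_block_pattern m c1 c2 i : (m < L)%N ->
  bit (block_pattern m c1 c2) i = ((i == m.*2) && c1) || ((i == m.*2.+1) && c2).
Proof.
move=> lt_mL; rewrite /bit; case: insubP => [j _ <-|]; first by rewrite ffunE.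
rewrite -leqNgt => le_ni; have [ne1 ne2] : i != m.*2 /\ i != m.*2.+1 by split; lia.
by rewrite (negbTE ne1) (negbTE ne2).
Qed.

Lemma bit_fill_block m (y : B) i : (m < L)%N ->
  bit (fill_block m y) i = [|| i == m.*2, i == m.*2.+1 | bit y i].
Proof.
move=> lt_mL; rewrite /bit; case: insubP => [j _ <-|]; first by rewrite ffunE.
rewrite -leqNgt => le_ni; have [ne1 ne2] : i != m.*2 /\ i != m.*2.+1 by split; lia.
by rewrite (negbTE ne1) (negbTE ne2).
Qed.

Lemma ones_block_fill m (y : B) : (m < L)%N ->
  (forall l, (l < m)%N -> ones_block y l) ->
  forall l, (l < m.+1)%N -> ones_block (fill_block m y) l.
Proof.
move=> lt_mL ones_y l; rewrite ltnS leq_eqVlt => /orP[/eqP->|lt_lm].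
  by rewrite /ones_block !bit_fill_block // !eqxx orbT.
have [ne1 ne2] : l.*2 != m.*2 /\ l.*2 != m.*2.+1 by split; lia.
have [ne3 ne4] : l.*2.+1 != m.*2 /\ l.*2.+1 != m.*2.+1 by split; lia.
have := ones_y l lt_lm; rewrite /ones_block !bit_fill_block //.
by rewrite !(negbTE ne1, negbTE ne2, negbTE ne3, negbTE ne4).
Qed.

Lemma mask_from_bxor_pattern m c1 c2 (z : B) : (m < L)%N ->
  mask_from m.+1.*2 (bxor z (block_pattern m c1 c2)) = mask_from m.+1.*2 z.
Proof.
move=> lt_mL; apply: bitP => i _; rewrite !bit_mask_from bit_bxor bit_block_pattern //.
case: (leqP m.+1.*2 i) => //= le_i; have [ne1 ne2] : i != m.*2 /\ i != m.*2.+1 by split; lia.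
by rewrite (negbTE ne1) (negbTE ne2) addbF.
Qed.

Lemma pot_mask_from_block m (y z : B) : (m < L)%N ->
  (forall l, (l < m)%N -> ones_block y l) ->
  let b1 := bit y m.*2 (+) bit z m.*2 in let b2 := bit y m.*2.+1 (+) bit z m.*2.+1 in
  pot (DLB (bxor y (mask_from m.*2 z))) =
    if b1 && b2 then pot (DLB (bxor (fill_block m y) (mask_from m.+1.*2 z)))
    else if ~~ b1 && ~~ b2 then pot m.*2.+1 else pot m.*2.
Proof.
move=> lt_mL ones_y b1 b2; set s := bxor y (mask_from m.*2 z).
have s_b1 : bit s m.*2 = b1 by rewrite bit_bxor bit_mask_from leqnn.
have s_b2 : bit s m.*2.+1 = b2 by rewrite bit_bxor bit_mask_from leqnSn.
case: ifP => [/andP[b1T b2T]|not_b12].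
  congr (pot (DLB _)); apply: bitP => i _.
  rewrite !bit_bxor !bit_mask_from bit_fill_block //.
  have [lt_i2|ge_i2] := ltnP i m.+1.*2; last first.
    have [ne1 ne2] : i != m.*2 /\ i != m.*2.+1 by split; lia.
    have le_i : (m.*2 <= i)%N by lia.
    by rewrite (negbTE ne1) (negbTE ne2) le_i.
  have [lt_i|ge_i] := ltnP i m.*2; last first.
    have [->|->] : i = m.*2 \/ i = m.*2.+1 by lia.
      by rewrite eqxx -/b1 b1T.
    by rewrite eqxx orbT -/b2 b2T.
  have [ne1 ne2] : i != m.*2 /\ i != m.*2.+1 by split; lia.
  by rewrite (negbTE ne1) (negbTE ne2) /= !addbF.
have s_lt l : (l < m)%N -> ones_block s l.
  have agree i : (i < m.*2)%N -> bit s i = bit y i by apply: bit_bxor_mask_from_lt.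
  move=> lt_lm; have le_lm : (l.*2.+2 <= m.*2)%N by rewrite -doubleS leq_double.
  by have [-> _] := blocks_agree le_lm agree; apply: ones_y.
rewrite (DLB_at_block lt_mL s_lt); last by rewrite /ones_block s_b1 s_b2 not_b12.
by rewrite /zeros_block s_b1 s_b2; case: ifP.
Qed.

Lemma sum_pot_mask_from_block m (y : B) : (m < L)%N ->
  (forall l, (l < m)%N -> ones_block y l) ->
  4 * \sum_z pot (DLB (bxor y (mask_from m.*2 z))) =
    \sum_z pot (DLB (bxor (fill_block m y) (mask_from m.+1.*2 z)))
    + #|{: B}|%:R * (pot m.*2.+1 + 2 * pot m.*2).
Proof.
move=> lt_mL ones_y.
set G := fun z => pot (DLB (bxor y (mask_from m.*2 z))).
set H := fun z => pot (DLB (bxor (fill_block m y) (mask_from m.+1.*2 z))).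
(* Shifting z by the four patterns of block m makes that block of [bxor y z] run through
   11, 10, 01 and 00, while the bits behind it are unchanged. *)
have G_shift c1 c2 z : G (bxor z (block_pattern m c1 c2)) =
    let b1 := bit y m.*2 (+) bit z m.*2 (+) c1 in
    let b2 := bit y m.*2.+1 (+) bit z m.*2.+1 (+) c2 in
    if b1 && b2 then H z else if ~~ b1 && ~~ b2 then pot m.*2.+1 else pot m.*2.
  rewrite /G pot_mask_from_block // mask_from_bxor_pattern // !bit_bxor.
  by rewrite !bit_block_pattern // !eqxx ltn_eqF // gtn_eqF //= !orbF !addbA.
have G_four z :
    G (bxor z (block_pattern m true true)) + G (bxor z (block_pattern m true false))
    + G (bxor z (block_pattern m false true)) + G (bxor z (block_pattern m false false))
    = H z + pot m.*2.+1 + 2 * pot m.*2.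
  rewrite !G_shift /=.
  by case: (bit y m.*2 (+) bit z m.*2); case: (bit y m.*2.+1 (+) bit z m.*2.+1) => /=; ring.
have sum_shift c1 c2 : \sum_z G (bxor z (block_pattern m c1 c2)) = \sum_z G z.
  by rewrite -sum_bxor.
transitivity (\sum_z (H z + pot m.*2.+1 + 2 * pot m.*2)).
  by rewrite -(eq_bigr _ (fun z _ => G_four z)) !big_split /= !sum_shift; ring.
rewrite !big_split /= !sumr_const -(mulr_natl (pot _)) -(mulr_natl (2 * _)).
by rewrite mulrDr addrA.
Qed.

Lemma sum_pot_mask_from m (y : B) : (m <= L)%N ->
  (forall l, (l < m)%N -> ones_block y l) ->
  \sum_z pot (DLB (bxor y (mask_from m.*2 z))) = #|{: B}|%:R * tail_pot m.
Proof.
have [k def_k] : exists k, (L - m)%N = k by exists (L - m)%N.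
elim: k m y def_k => [|k IH] m y def_k le_mL ones_y.
  have eq_mL : m = L by lia.
  have le_ML : (M <= L)%N by lia.
  rewrite eq_mL in ones_y *; rewrite /tail_pot (maxn_idPl le_ML) subnn oppr0 mulr0.
  have /eqP DLB_y : DLB y == n.
    by rewrite DLB_eq_n (crit_block_eq (leqnn L) ones_y) // ltnn.
  by rewrite big1 // => z _; rewrite mask_from_ge // bxor0 DLB_y /pot eqxx.
have lt_mL : (m < L)%N by lia.
have four_neq0 : (4 : R) != 0 by rewrite pnatr_eq0.
apply: (mulfI four_neq0); rewrite sum_pot_mask_from_block //.
rewrite (IH m.+1 (fill_block m y) _ lt_mL (ones_block_fill lt_mL ones_y)); last by lia.
by rewrite [4 * _]mulrCA -(tail_pot_step lt_mL) -mulrDr addrA.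
Qed.

End Potential.

Section SymmetryBound.
Variables (R : realType) (L : nat).
Local Notation n := L.*2.
Local Notation B := (B n).
Variable V : B -> B -> R.
Hypothesis V_unbiased : unary_unbiased V.

Definition flips_block_first m (w : B) : bool :=
  [&& bit w m.*2, bit w m.*2.+1 & [forall i : 'I_n, (i < m.*2)%N ==> ~~ w i]].

Lemma sum_bperm (F : B -> R) (s : {perm 'I_n}) :
  \sum_w V (zeros n) w * F w = \sum_w V (zeros n) w * F (bperm s w).
Proof.
have bpermK : cancel (bperm s) (bperm s^-1).
  by move=> w; apply/ffunP => i; rewrite !ffunE -permM mulVg perm1.
have bperm_zeros : bperm s (zeros n) = zeros n by apply/ffunP => i; rewrite !ffunE.
rewrite (reindex_inj (can_inj bpermK)); apply: eq_bigr => w _.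
by case: V_unbiased => _ _ _ V_perm; rewrite [in RHS](V_perm _ _ s) bperm_zeros.
Qed.

Section Block.
Variable m : nat.
Hypothesis lt_mL : (m < L)%N.

Fact lt_2m_n : (m.*2 < n)%N. Proof. by rewrite ltn_double. Qed.
Fact lt_2m1_n : (m.*2.+1 < n)%N. Proof. by rewrite ltn_Sdouble. Qed.
Fact lt_low_n (i : 'I_m) : (i < n)%N. Proof. by have := ltn_ord i; lia. Qed.
Fact lt_high_n (j : 'I_m) : (m + j < n)%N. Proof. by have := ltn_ord j; lia. Qed.

Definition block_swap (i j : 'I_m) : {perm 'I_n} :=
  (tperm (Ordinal lt_2m_n) (Ordinal (lt_low_n i))
   * tperm (Ordinal lt_2m1_n) (Ordinal (lt_high_n j)))%g.

Lemma flips_block_first_swap (w : B) (i j : 'I_m) :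
  flips_block_first m (bperm (block_swap i j) w) ->
  forall k : 'I_n, (k < m.*2)%N -> w k = (k == i :> nat) || (k == m + j :> nat).
Proof.
have [lt_i lt_j] := (ltn_ord i, ltn_ord j).
set a := Ordinal lt_2m_n; set b := Ordinal lt_2m1_n.
set ai := Ordinal (lt_low_n i); set bj := Ordinal (lt_high_n j).
have neq (u v : 'I_n) : val u != val v -> u != v by apply: contra => /eqP ->.
have [a_b ai_b] : a != b /\ ai != b by split; apply: neq => /=; lia.
have [b_ai bj_ai] : b != ai /\ bj != ai by split; apply: neq => /=; lia.
rewrite /flips_block_first /block_swap -[m.*2]/(val a) -[m.*2.+1]/(val b) !bitE !ffunE !permM.
rewrite tpermL (tpermD b_ai bj_ai) (tpermD a_b ai_b) tpermL.
case/and3P => w_ai w_bj /forallP w_low k lt_k.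
have [->|k_ai] := eqVneq k ai; first by rewrite w_ai eqxx.
have [->|k_bj] := eqVneq k bj; first by rewrite w_bj eqxx orbT.
have lt_k_2m : (k < m.*2)%N := lt_k.
have [a_k b_k] : a != k /\ b != k by split; apply: neq => /=; lia.
have [ai_k bj_k] : ai != k /\ bj != k by rewrite ![_ == k]eq_sym.
have := w_low k; rewrite lt_k ffunE permM (tpermD a_k ai_k) (tpermD b_k bj_k).
move/negbTE->; apply/esym/norP; split.
- by apply: contra k_ai => /eqP eq_k; apply/eqP/val_inj.
- by apply: contra k_bj => /eqP eq_k; apply/eqP/val_inj.
Qed.

Lemma sum_flips_block_first_swap (w : B) :
  \sum_(i < m) \sum_(j < m) (flips_block_first m (bperm (block_swap i j) w))%:R <= 1 :> R.
Proof.
rewrite pair_bigA /=.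
case: (pickP (fun p : 'I_m * 'I_m => flips_block_first m (bperm (block_swap p.1 p.2) w)))
  => [[i j] /= flips_ij|none]; last by rewrite big1 // => p _; rewrite none.
rewrite (bigD1 (i, j)) //= flips_ij big1 ?addr0 // => -[i' j'] /= ne_ij.
case flips_ij': (flips_block_first _ _) => //.
have [[lt_i lt_j] [lt_i' lt_j']] := ((ltn_ord i, ltn_ord j), (ltn_ord i', ltn_ord j')).
have w_ij := flips_block_first_swap flips_ij.
have w_ij' := flips_block_first_swap flips_ij'.
have w_i' : w (Ordinal (lt_low_n i')) by rewrite w_ij' /= ?eqxx //; lia.
have w_j' : w (Ordinal (lt_high_n j')) by rewrite w_ij' /= ?eqxx ?orbT //; lia.
rewrite w_ij /= in w_i'; last lia.
rewrite w_ij /= in w_j'; last lia.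
have eq_i : i' = i by apply: ord_inj; case/orP: w_i' => /eqP //; lia.
have eq_j : j' = j by apply: ord_inj; case/orP: w_j' => /eqP; lia.
by move: ne_ij; rewrite eq_i eq_j eqxx.
Qed.

(* The m^2 events [flips_block_first m (bperm (block_swap i j) w)] all have the
   probability of [flips_block_first m w], and they are pairwise disjoint. *)
Lemma prob_flips_block_first :
  (\sum_w V (zeros n) w * (flips_block_first m w)%:R) * (m%:R * m%:R) <= 1.
Proof.
set P := \sum_w _.
have P_swap (i j : 'I_m) :
    P = \sum_w V (zeros n) w * (flips_block_first m (bperm (block_swap i j) w))%:R.
  exact: (sum_bperm (fun w => (flips_block_first m w)%:R)).
have -> : P * (m%:R * m%:R) = \sum_(i < m) \sum_(j < m) P.
  by rewrite !sumr_const !card_ord -mulrnA -natrM mulr_natr.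
under eq_bigr => i _ do under eq_bigr => j _ do rewrite (P_swap i j).
under eq_bigr => i _ do rewrite exchange_big /=.
rewrite exchange_big /=.
apply: le_trans (_ : \sum_w V (zeros n) w <= 1); last by case: V_unbiased => _ ->.
apply: ler_sum => w _; rewrite -[leRHS]mulr1.
under eq_bigr => i _ do rewrite -mulr_sumr.
rewrite -mulr_sumr; apply: ler_wpM2l; first by case: V_unbiased.
exact: sum_flips_block_first_swap.
Qed.

End Block.
End SymmetryBound.

Section Drift.
Variables (R : realType) (L : nat).
Local Notation n := L.*2.
Local Notation M := L./2.
Local Notation B := (B n).
Local Notation pot := (@pot R L).

Definition late_zeros_block (x : B) :=
  [&& crit_block x < L, M <= crit_block x & zeros_block x (crit_block x)]%N.

Definition repairs (x w : B) :=
  (crit_block x < L)%N && [forall l : 'I_(crit_block x).+1, ones_block (bxor x w) l].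

Lemma repairsP (x w : B) :
  reflect ((crit_block x < L)%N /\
           forall l, (l <= crit_block x)%N -> ones_block (bxor x w) l)
          (repairs x w).
Proof.
apply: (iffP andP) => -[lt_mL ones_xw]; split=> //.
  by move=> l; rewrite -ltnS => lt_l; apply: (forallP ones_xw (Ordinal lt_l)).
by apply/forallP => l; apply: ones_xw; rewrite -ltnS.
Qed.

Lemma flips_block_first_repair (x w : B) :
  (crit_block x < L)%N -> zeros_block x (crit_block x) ->
  (forall l, (l <= crit_block x)%N -> ones_block (bxor x w) l) ->
  flips_block_first (crit_block x) w.
Proof.
set m := crit_block x => lt_mL zeros_m ones_xw.
have bit_w i : bit w i = bit x i (+) bit (bxor x w) i by rewrite bit_bxor addKb.
have := ones_xw m (leqnn m); move: zeros_m.
rewrite /flips_block_first /ones_block /zeros_block !bit_w.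
case/andP => /negbTE-> /negbTE-> /andP[-> ->] /=.
apply/forallP => i; apply/implyP => lt_i; rewrite -bitE bit_w.
have lt_half : (i./2 < m)%N by rewrite ltn_half_double.
move: (ones_block_lt_crit lt_half) (ones_xw _ (ltnW lt_half)); set l := i./2.
have [->|->] : (i : nat) = l.*2 \/ (i : nat) = l.*2.+1 by rewrite /l; lia.
  by rewrite /ones_block => /andP[-> _] /andP[-> _].
by rewrite /ones_block => /andP[_ ->] /andP[_ ->].
Qed.

Lemma tail_pot_repair_le (x w : B) : (crit_block x < L)%N ->
  (forall l, (l <= crit_block x)%N -> ones_block (bxor x w) l) ->
  tail_pot R L (crit_block x).+1 <=
    pot (DLB x) + 4 * (late_zeros_block x && flips_block_first (crit_block x) w)%:R.
Proof.
set m := crit_block x => lt_mL ones_xw.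
rewrite DLB_crit -/m lt_mL /late_zeros_block -/m lt_mL /tail_pot.
case: (ltnP m M) => [lt_mM|le_Mm] /=.
  by rewrite (maxn_idPr lt_mM) mulr0 addr0; case: ifP; rewrite ?pot_double ?pot_double1 ?lt_mM.
rewrite (maxn_idPl (leqW le_Mm)).
case: ifP => zeros_m; last by rewrite pot_double // ltnNge le_Mm /= mulr0 addr0.
by rewrite flips_block_first_repair // pot_double1 // ltnNge le_Mm /= mulr1 subrK.
Qed.

Lemma DLB_repair (x w z : B) : (crit_block x < L)%N ->
  (forall l, (l <= crit_block x)%N -> ones_block (bxor x w) l) ->
  let q := bxor (bxor x w) (mask_from (crit_block x).+1.*2 z) in
  maxn (DLB x) (DLB q) = DLB q.
Proof.
set m := crit_block x => lt_mL ones_xw q; apply/maxn_idPr/ltnW.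
have agree i : (i < m.+1.*2)%N -> bit q i = bit (bxor x w) i.
  exact: bit_bxor_mask_from_lt.
have ones_q l : (l < m.+1)%N -> ones_block q l.
  move=> lt_lm; have le_l : (l.*2.+2 <= m.+1.*2)%N by rewrite -doubleS leq_double.
  by have [-> _] := blocks_agree le_l agree; apply: ones_xw.
have le_mq := crit_block_ge lt_mL ones_q.
apply: leq_trans (DLB_lt_crit lt_mL) _; apply: leq_trans (DLB_ge_crit q).
by rewrite -doubleS leq_double.
Qed.

Lemma sum_pot_repair (x w : B) : (crit_block x < L)%N ->
  (forall l, (l <= crit_block x)%N -> ones_block (bxor x w) l) ->
  \sum_z pot (maxn (DLB x) (DLB (bxor (bxor x w) (mask_from (crit_block x).+1.*2 z))))
  = #|{: B}|%:R * tail_pot R L (crit_block x).+1.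
Proof.
move=> lt_mL ones_xw; under eq_bigr => z _ do rewrite DLB_repair //.
exact: sum_pot_mask_from.
Qed.

Lemma pot_no_repair_le (x w z : B) : ~~ repairs x w ->
  pot (maxn (DLB x) (DLB (bxor (bxor x w) (mask_from (crit_block x).*2.+2 z))))
  <= pot (DLB x).
Proof.
set m := crit_block x; set q := bxor (bxor x w) _ => no_repair.
have [_|lt_xq] := leqP (DLB q) (DLB x); first exact: lexx.
have lt_mL : (m < L)%N.
  rewrite ltn_neqAle crit_block_le andbT -DLB_eq_n.
  by apply: contraTneq lt_xq => ->; rewrite -leqNgt DLB_le.
move: no_repair; rewrite /repairs lt_mL /= => /forallPn[l not_ones_l].
have agree i : (i < m.*2.+2)%N -> bit q i = bit (bxor x w) i.
  exact: bit_bxor_mask_from_lt.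
have le_ql : (crit_block q <= l)%N.
  rewrite leqNgt; apply/negP => /ones_block_lt_crit.
  have le_l : (l.*2.+2 <= m.*2.+2)%N by rewrite !ltnS leq_double -ltnS ltn_ord.
  by have [-> _] := blocks_agree le_l agree; apply/negP.
have eq_c : crit_block q = m.
  have le_qm : (crit_block q <= m)%N by rewrite (leq_trans le_ql) // -ltnS ltn_ord.
  apply/eqP; rewrite eqn_leq le_qm leqNgt; apply/negP => lt_qm.
  have := DLB_lt_crit (ltn_trans lt_qm lt_mL); have := DLB_ge_crit x; rewrite -/m; lia.
move: lt_xq; rewrite (DLB_crit q) (DLB_crit x) eq_c -/m lt_mL.
case: (zeros_block x m); case: (zeros_block q m) => //= lt_xq; try lia.
exact: pot_double1_le.
Qed.

Lemma sum_pot_offspring_le (x w : B) :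
  \sum_z pot (maxn (DLB x) (DLB (bxor (bxor x w) (mask_from (crit_block x).*2.+2 z))))
  <= #|{: B}|%:R *
     (pot (DLB x) + 4 * (late_zeros_block x && flips_block_first (crit_block x) w)%:R).
Proof.
have [/repairsP[lt_mL ones_xw]|no_repair] := boolP (repairs x w).
  by rewrite -doubleS sum_pot_repair // ler_wpM2l // tail_pot_repair_le.
apply: le_trans (ler_sum _ (fun z _ => pot_no_repair_le z no_repair)) _.
by rewrite sumr_const -(mulr_natl (pot _)) ler_wpM2l // lerDl mulr_ge0.
Qed.

Definition next_pot (A : ealg R n) h (y : B) : R :=
  \sum_q op A h y q * pot (DLB (select A (rcons h (DLB q)) y q)).

(* By XOR-invariance, [op A h (zeros n) w] is the probability that the operator flips
   exactly the bits set in [w]. *)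
Lemma next_potE (A : ealg R n) h (y : B) : next_pot A h y =
  \sum_w op A h (zeros n) w * pot (maxn (DLB y) (DLB (bxor y w))).
Proof.
rewrite /next_pot (reindex_inj (can_inj (bxorKl y))); apply: eq_bigr => w _.
by rewrite select_DLB -(op_bxor A h (zeros n) w y) [bxor _ y]bxorC bxor0 [bxor w y]bxorC.
Qed.

Lemma prob_late_flips_le (A : ealg R n) h (x : B) : (0 < M)%N ->
  \sum_w op A h (zeros n) w * (late_zeros_block x && flips_block_first (crit_block x) w)%:R
  <= (M%:R * M%:R)^-1.
Proof.
move=> M_gt0; have MM_gt0 : 0 < M%:R * M%:R :> R by rewrite mulr_gt0 ?ltr0n.
have [late|_] := boolP (late_zeros_block x); last first.
  by rewrite big1 ?invr_ge0 ?ltW // => w _; rewrite mulr0.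
have /and3P[lt_mL le_Mm _] := late; rewrite -div1r ler_pdivlMr //=.
apply: le_trans (prob_flips_block_first (op_unbiased A h) lt_mL); apply: ler_wpM2l.
  by apply: sumr_ge0 => w _; rewrite mulr_ge0 ?op_ge0.
by rewrite -!natrM ler_nat leq_mul.
Qed.

Lemma sum_next_pot_le (A : ealg R n) h (x : B) : (0 < M)%N ->
  \sum_z next_pot A h (bxor x (mask_from (crit_block x).*2.+2 z))
  <= #|{: B}|%:R * (pot (DLB x) + 4 / (M%:R * M%:R)).
Proof.
move=> M_gt0; set N : R := #|{: B}|%:R.
pose b (w : B) : R := (late_zeros_block x && flips_block_first (crit_block x) w)%:R.
under eq_bigr => z _ do rewrite next_potE (crit_block_bxor_mask_from _ (leqnn _)).2.
rewrite exchange_big /=.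
apply: (@le_trans _ _ (\sum_w op A h (zeros n) w * (N * (pot (DLB x) + 4 * b w)))).
  apply: ler_sum => w _; rewrite -mulr_sumr ler_wpM2l ?op_ge0 //.
  under eq_bigr => z _ do rewrite bxorAC.
  exact: sum_pot_offspring_le.
have -> : \sum_w op A h (zeros n) w * (N * (pot (DLB x) + 4 * b w)) =
    N * pot (DLB x) * \sum_w op A h (zeros n) w + 4 * N * \sum_w op A h (zeros n) w * b w.
  rewrite !mulr_sumr -big_split; apply: eq_bigr => w _ /=; ring.
rewrite op_sum1 mulr1 mulrDr lerD2l -mulrA mulrCA ler_wpM2l // ler_wpM2l //.
exact: prob_late_flips_le.
Qed.

End Drift.

Lemma sum_tuple_rcons (T : finType) (V : nmodType) k (F : k.+1.-tuple T -> V) :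
  \sum_t F t = \sum_(t : k.-tuple T) \sum_q F [tuple of rcons t q].
Proof.
pose split_last (t : k.+1.-tuple T) :=
  ([tuple of belast (thead t) (behead t)], last (thead t) (behead t)).
have rcons_split t : rcons (split_last t).1 (split_last t).2 = t :> seq T.
  by case/tupleP: t => x s; rewrite /= theadE -lastI.
rewrite pair_bigA (reindex (fun p : k.-tuple T * T => [tuple of rcons p.1 p.2])) //.
exists split_last => [[s q] _|t _]; last exact/val_inj/rcons_split.
have /rcons_inj[eq_s eq_q] := rcons_split [tuple of rcons s q].
by congr (_, _); [apply: val_inj; exact: eq_s | exact: eq_q].
Qed.

Lemma sum_tuple0 (T : finType) (V : nmodType) (F : 0.-tuple T -> V) :
  \sum_t F t = F [tuple].
Proof. by rewrite (big_pred1 [tuple]) // => t; apply/esym/eqP/tuple0. Qed.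

Section Trajectories.
Variables (R : realType) (L : nat).
Local Notation n := L.*2.
Local Notation M := L./2.
Local Notation B := (B n).
Local Notation pot := (@pot R L).
Variable A : ealg R n.
Local Notation state := (traj_state A).

Lemma tuple_neq_nil k (t : k.+1.-tuple B) : (t : seq B) != [::].
Proof. by case/tupleP: t. Qed.

Lemma card_B_gt0 : (0 : R) < #|{: B}|%:R.
Proof. by rewrite ltr0n; apply/card_gt0P; exists (zeros n). Qed.

Lemma sum_traj_prob k : \sum_(t : k.+1.-tuple B) traj_prob A t = 1.
Proof.
elim: k => [|k IH].
  rewrite sum_tuple_rcons sum_tuple0 /=; under eq_bigr => q _ do rewrite mulr1.
  by rewrite sumr_const -(mulr_natr (_^-1)) mulVf // lt0r_neq0 // card_B_gt0.
rewrite sum_tuple_rcons -[RHS]IH; apply: eq_bigr => t _.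
under eq_bigr => q _ do rewrite traj_prob_rcons ?tuple_neq_nil //.
by rewrite -mulr_sumr op_sum1 mulr1.
Qed.

Definition exp_pot k := \sum_(t : k.+1.-tuple B) traj_prob A t * pot (DLB (state t).2).

Lemma exp_pot0 : exp_pot 0 = tail_pot R L 0.
Proof.
rewrite /exp_pot sum_tuple_rcons sum_tuple0 /=; under eq_bigr => q _ do rewrite mulr1.
rewrite -mulr_sumr.
have -> : \sum_(q : B) pot (DLB q) = #|{: B}|%:R * tail_pot R L 0.
  rewrite -(@sum_pot_mask_from R L 0 (zeros n)) //.
  by apply: eq_bigr => z _; rewrite mask_from0 bxorC bxor0.
by rewrite mulrA mulVf ?mul1r // lt0r_neq0 // card_B_gt0.
Qed.

Lemma DLB_le_state (t : seq B) y : y \in t -> (DLB y <= DLB (state t).2)%N.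
Proof. by case: t => // q0 qs; apply: DLB_le_run. Qed.

(* The bits behind the critical block of the current point have never influenced the
   run, so XORing them into every evaluated point is a symmetry of the trajectories. *)
Definition tail_mask (z : B) (t : seq B) := mask_from (crit_block (state t).2).*2.+2 z.

Definition tail_shift (z : B) (t : seq B) := [seq bxor y (tail_mask z t) | y <- t].

Lemma tail_shiftE z (t : seq B) : t != [::] ->
  [/\ state (tail_shift z t) = ((state t).1, bxor (state t).2 (tail_mask z t)),
      traj_prob A (tail_shift z t) = traj_prob A t &
      crit_block (bxor (state t).2 (tail_mask z t)) = crit_block (state t).2].
Proof.
move=> t_nil; have fix_DLB : all (fun y => DLB (bxor y (tail_mask z t)) == DLB y) t.
  by apply/allP => y /DLB_le_state le_y; rewrite DLB_bxor_mask_from_le.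
split; last exact: (crit_block_bxor_mask_from _ (leqnn _)).1.
- case: t t_nil fix_DLB => // q0 qs _ fix_DLB.
  by rewrite /= (eqP (allP fix_DLB q0 (mem_head _ _))) run_bxor.
- case: t t_nil fix_DLB => // q0 qs _ fix_DLB.
  by rewrite /= (eqP (allP fix_DLB q0 (mem_head _ _))) steps_bxor.
Qed.

Lemma tail_shiftK k z : involutive (fun t : k.+1.-tuple B => [tuple of tail_shift z t]).
Proof.
move=> t; apply: val_inj => /=; have [state_t _ crit_t] := tail_shiftE z (tuple_neq_nil t).
rewrite {1}/tail_shift /tail_mask state_t /= crit_t -map_comp -[RHS]map_id.
by apply: eq_map => y /=; rewrite bxorK.
Qed.

Lemma sum_traj_tail_shift (G : seq nat -> B -> R) k z :
  \sum_(t : k.+1.-tuple B) traj_prob A t * G (state t).1 (state t).2 =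
  \sum_(t : k.+1.-tuple B) traj_prob A t * G (state t).1 (bxor (state t).2 (tail_mask z t)).
Proof.
rewrite (reindex_inj (inv_inj (tail_shiftK (k := k) z))); apply: eq_bigr => t _.
by have [/= -> -> _] := tail_shiftE z (tuple_neq_nil t).
Qed.

Lemma exp_pot_succ k :
  exp_pot k.+1 = \sum_(t : k.+1.-tuple B) traj_prob A t * next_pot A (state t).1 (state t).2.
Proof.
rewrite /exp_pot sum_tuple_rcons; apply: eq_bigr => t _; rewrite /next_pot mulr_sumr.
apply: eq_bigr => q _.
by rewrite /= traj_prob_rcons ?tuple_neq_nil // traj_state_rcons ?tuple_neq_nil //= mulrA.
Qed.

Lemma exp_pot_step k : (0 < M)%N -> exp_pot k.+1 <= exp_pot k + 4 / (M%:R * M%:R).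
Proof.
move=> M_gt0; rewrite -(ler_pM2l card_B_gt0) exp_pot_succ.
have -> : #|{: B}|%:R *
      \sum_(t : k.+1.-tuple B) traj_prob A t * next_pot A (state t).1 (state t).2
    = \sum_z \sum_(t : k.+1.-tuple B)
        traj_prob A t * next_pot A (state t).1 (bxor (state t).2 (tail_mask z t)).
  by rewrite mulr_natl (eq_bigr _ (fun z _ => esym (sum_traj_tail_shift _ k z))) sumr_const.
set N : R := #|{: B}|%:R; set d := 4 / _; rewrite exchange_big /=.
apply: (@le_trans _ _
  (\sum_(t : k.+1.-tuple B) traj_prob A t * (N * (pot (DLB (state t).2) + d)))).
  apply: ler_sum => t _; rewrite -mulr_sumr ler_wpM2l ?traj_prob_ge0 //.
  exact: sum_next_pot_le.
have -> : \sum_(t : k.+1.-tuple B) traj_prob A t * (N * (pot (DLB (state t).2) + d)) =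
    N * exp_pot k + N * d * \sum_(t : k.+1.-tuple B) traj_prob A t.
  rewrite /exp_pot mulr_sumr [X in _ + X]mulr_sumr -big_split; apply: eq_bigr => t _ /=; ring.
by rewrite sum_traj_prob mulr1 mulrDr.
Qed.

Lemma exp_pot_le k : (0 < M)%N ->
  exp_pot k <= tail_pot R L 0 + k%:R * (4 / (M%:R * M%:R)).
Proof.
move=> M_gt0; set d := 4 / _; elim: k => [|k IH]; first by rewrite exp_pot0 mul0r addr0.
by have := exp_pot_step k M_gt0; rewrite -/d -[k.+1%:R]natr1; lra.
Qed.

Lemma exp_pot_ge k : - ((L - M)%:R + 4) * surv A k.+1 <= exp_pot k.
Proof.
rewrite /surv /exp_pot mulr_sumr; apply: ler_sum => t _.
case: ifP => [_|/negbT/allPn[y y_t /negPn]].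
  by rewrite mulrC ler_wpM2l ?traj_prob_ge0 ?pot_ge.
rewrite optimalE mulr0 => /eqP DLB_y.
have /eqP -> : DLB (state t).2 == n by rewrite eqn_leq DLB_le -{1}DLB_y DLB_le_state.
by rewrite /pot eqxx mulr0.
Qed.

Lemma surv_ge0 k : 0 <= surv A k.
Proof. by apply: sumr_ge0 => t _; case: ifP => _ //; exact: traj_prob_ge0. Qed.

Lemma surv_ge_quarter j : (0 < M)%N -> (4 <= L - M)%N ->
  (8 * j <= (L - M) * (M * M))%N -> 1 / 4 <= surv A j.+1.
Proof.
move=> M_gt0 le4 le_j; have lo := exp_pot_ge j; have hi := exp_pot_le j M_gt0.
rewrite /tail_pot max0n in hi; set a := (L - M)%:R in lo hi; set s := surv A j.+1 in lo *.
set X : R := M%:R * M%:R in hi *; have X_gt0 : 0 < X by rewrite mulr_gt0 ?ltr0n.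
have a4 : 4 <= a by rewrite /a (ler_nat R 4).
have le_jd : j%:R * (4 / X) <= a / 2.
  rewrite mulrA ler_pdivrMr // mulrAC ler_pdivlMr //.
  have : (8 * j)%:R <= ((L - M) * (M * M))%:R :> R by rewrite ler_nat.
  by rewrite !natrM -/a -/X; lra.
have : (a + 4) * (1 / 4) <= (a + 4) * s by lra.
by rewrite ler_pM2l //; lra.
Qed.

Lemma expected_runtime_ge : (0 < M)%N -> (4 <= L - M)%N ->
  (((((L - M) * (M * M)) %/ 8).+1%:R / 4)%:E <= expected_runtime A)%E.
Proof.
move=> M_gt0 le4; set K := (_ %/ 8)%N.
apply: le_trans (nneseries_lim_ge K.+2 _); last by move=> k _ _; rewrite lee_fin surv_ge0.
rewrite sumEFin lee_fin big_nat_recl // -[leLHS]add0r lerD ?surv_ge0 //.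
apply: (@le_trans _ _ (\sum_(0 <= i < K.+1) 1 / 4)).
  by rewrite sumr_const_nat subn0 mulrnAl.
apply: ler_sum_nat => i /andP[_ lt_i]; apply: surv_ge_quarter => //.
by rewrite (leq_trans _ (leq_divM _ 8)) // mulnC leq_mul2r -ltnS lt_i orbT.
Qed.

End Trajectories.

Lemma cube_le_runtime_bound L : (32 <= L)%N ->
  (L.*2 ^ 3 <= 2048 * (((L - L./2) * (L./2 * L./2)) %/ 8).+1)%N.
Proof.
move=> le32L; set M := L./2; set K := (_ %/ 8)%N.
have lt_K : ((L - M) * (M * M) < 8 * K.+1)%N by rewrite [(8 * _)%N]mulnC ltn_ceil.
have le_cube : (L * L * L <= (2 * (L - M)) * (4 * M) * (4 * M))%N.
  by rewrite !leq_mul //; rewrite /M; lia.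
rewrite -muln2 expnMn; lia.
Qed.

Unset Implicit Arguments.

Theorem theorem9 (R : realType) :
  exists c : R, 0 < c /\
  exists N : nat, forall n : nat, ~~ odd n -> (N <= n)%N ->
    ((c * n%:R ^+ 3)%:E <= dlb_complexity R n)%E.
Proof.
exists (1 / 8192); split; first by rewrite divr_gt0 ?ltr0n.
exists 64%N => n even_n le64n.
have [L def_n] : exists L, n = L.*2.
  by exists n./2; rewrite -[LHS]odd_double_half (negbTE even_n).
subst n.
apply/ereal_infP => _ [A _ <-].
apply: le_trans (expected_runtime_ge A _ _); rewrite ?lee_fin; try lia.
have : (L.*2 ^ 3)%N%:R <= (2048 * (((L - L./2) * (L./2 * L./2)) %/ 8).+1)%N%:R :> R.
  by rewrite ler_nat cube_le_runtime_bound //; lia.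
by rewrite natrX natrM; lra.
Qed.
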